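(* Let $\mathcal{H}$ be a finite-dimensional Hilbert space and $\tau$ an ergodic quantum channel on $\mathcal{H}$ whose unique fixed density matrix is pure, $|\psi_1\rangle\langle\psi_1|$. Then $\tau$ is mixing, i.e. $\tau^n(\rho)\to|\psi_1\rangle\langle\psi_1|$ for every density matrix $\rho$ on $\mathcal{H}$.
   Context: A quantum channel is a linear, completely positive, trace-preserving map on the space of linear operators on $\mathcal{H}$. It is ergodic if it has exactly one fixed point in the set of density matrices on $\mathcal{H}$; it is mixing if there is a density matrix $\rho_*$ with $\tau^n(\rho)\to\rho_*$ for every density matrix $\rho$. *)

From HB Require Import structures.
From mathcomp Require Import all_boot all_order all_algebra.
From mathcomp Require Import all_classical all_reals all_analysis.
From mathcomp Require Import complex.
Import numFieldNormedType.Exports.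
Set Implicit Arguments. Unset Strict Implicit. Unset Printing Implicit Defensive.
Import Order.TTheory GRing.Theory Num.Theory.
Local Open Scope ring_scope.
Local Open Scope complex_scope.
Local Open Scope classical_set_scope.

Section QC.
Variables (R : realType) (d : nat).
Local Notation C := R[i].

Definition adj m n (A : 'M[C]_(m, n)) : 'M[C]_(n, m) :=
  (map_mx (@Num.conj C) A)^T.

(* positive semidefinite: <v, A v> >= 0 for every vector v
   (in C, 0 <= z means z is a nonnegative real) *)
Definition psd (A : 'M[C]_d) : Prop :=
  forall v : 'cV[C]_d, 0 <= (adj v *m A *m v) 0 0.

Definition density (rho : 'M[C]_d) : Prop := psd rho /\ \tr rho = 1.

(* positivity of a k x k block matrix with d x d blocks X a b *)
Definition block_psd (k : nat) (X : 'I_k -> 'I_k -> 'M[C]_d) : Prop :=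
  forall v : 'I_k -> 'cV[C]_d,
    0 <= \sum_(a < k) \sum_(b < k) (adj (v a) *m X a b *m v b) 0 0.

(* id_k (x) T preserves positivity for every k *)
Definition completely_positive (T : 'M[C]_d -> 'M[C]_d) : Prop :=
  forall (k : nat) (X : 'I_k -> 'I_k -> 'M[C]_d),
    block_psd X -> block_psd (fun a b => T (X a b)).

Definition trace_preserving (T : 'M[C]_d -> 'M[C]_d) : Prop :=
  forall A, \tr (T A) = \tr A.

Definition quantum_channel (T : 'M[C]_d -> 'M[C]_d) : Prop :=
  linear T /\ completely_positive T /\ trace_preserving T.

Definition ergodic (T : 'M[C]_d -> 'M[C]_d) : Prop :=
  exists rho, density rho /\ T rho = rho /\
    forall sigma, density sigma -> T sigma = sigma -> sigma = rho.

(* entrywise convergence (real and imaginary parts) of a matrix sequence;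
   in finite dimension this is convergence in any norm *)
Definition mx_cvg (M : nat -> 'M[C]_d) (L : 'M[C]_d) : Prop :=
  forall i j : 'I_d,
    ((fun n => complex.Re (M n i j)) : R^nat) @ \oo --> (complex.Re (L i j) : R) /\
    ((fun n => complex.Im (M n i j)) : R^nat) @ \oo --> (complex.Im (L i j) : R).

Definition mixing (T : 'M[C]_d -> 'M[C]_d) : Prop :=
  exists rho_star, density rho_star /\
    forall rho, density rho -> mx_cvg (fun n => iter n T rho) rho_star.

End QC.

(* Let P = psi psi^*. For every density rho the fidelity
   <psi, T^n(rho) psi> is nondecreasing in n, because the weight that T moves
   off psi vanishes on P and is nonnegative on positive matrices. The Cesaro
   means of T^n(rho) cluster at a fixed density, which by ergodicity is P, so
   the fidelity tends to 1. Hence every cluster point of T^n(rho) is a density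
   with full weight on psi, i.e. P, and the bounded sequence T^n(rho), whose
   subsequences all cluster only at P, converges to P. *)

From HB Require Import structures.
From mathcomp Require Import all_boot all_order all_algebra.
From mathcomp Require Import all_classical all_reals all_analysis.
From mathcomp Require Import complex.
From mathcomp Require Import ring lra.
Import Order.TTheory GRing.Theory Num.Theory.
Local Open Scope ring_scope.
Local Open Scope complex_scope.
Local Open Scope classical_set_scope.
Import numFieldNormedType.Exports.
(* [Num.Theory] also exports [Re] and [Im], for numClosedFieldTypes *)
Local Notation Re := complex.Re.
Local Notation Im := complex.Im.
Set Implicit Arguments. Unset Strict Implicit. Unset Printing Implicit Defensive.

Section ComplexParts.
Variable R : realType.
Implicit Types x y : R[i].

Lemma ReM x y : Re (x * y) = Re x * Re y - Im x * Im y.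
Proof. by case: x; case: y => *; simpc. Qed.

Lemma ImM x y : Im (x * y) = Re x * Im y + Im x * Re y.
Proof. by case: x; case: y => *; simpc. Qed.

Lemma conj_real (t : R) : Num.conj (t%:C) = t%:C :> R[i].
Proof. exact: conjc_real. Qed.

Lemma complex_eq0 x : Re x = 0 -> Im x = 0 -> x = 0.
Proof. by case: x => a b /= -> ->. Qed.

Lemma ge0_le_eps (x : R) : (forall e, 0 < e -> - e <= x) -> 0 <= x.
Proof. by move=> x_ge; apply/ler_addgt0Pr => e e0; rewrite -lerBlDr sub0r x_ge. Qed.

Lemma quadratic_ge0_coef1_eq0 (c g : R[i]) : 0 <= g ->
  (forall t : R, 0 <= t%:C * c + (t * t)%:C * g) -> c = 0.
Proof.
case: c => c1 c2; case: g => g1 g2 g0 quad_ge0.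
have h1 := quad_ge0 1; pose t := - c1 / (g1 + 1); have h2 := quad_ge0 t.
move: h1 h2 g0; rewrite !lecE /=; simpc.
move=> /andP[/eqP e1 f1] /andP[/eqP e2 f2] /andP[/eqP e3 f3].
have ht : t * (g1 + 1) = - c1.
  by rewrite /t mulrAC -mulrA divff ?mulr1 //; apply: lt0r_neq0; lra.
have -> : c2 = 0 by lra.
have tt : t * t <= 0 by nra.
have t0 : t = 0 by nra.
by have -> : c1 = 0 by nra.
Qed.

Definition cpart (b : bool) x := if b then Re x else Im x.

Lemma cpartB b x y : cpart b (x - y) = cpart b x - cpart b y.
Proof. by case: b; rewrite /= raddfB. Qed.

Lemma cpart_realM b (c : R) x : cpart b (c%:C * x) = c * cpart b x.
Proof. by case: b; case: x => *; simpc. Qed.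

Definition cclose x y (e : R) := forall b, `|cpart b (x - y)| <= e.

End ComplexParts.

Section ClusterPoints.
Variables (R : realType) (m n : nat).
Local Notation C := R[i].
Local Notation M := 'M[C]_(m, n).
Implicit Types (X Y : M) (s : nat -> M).

Definition mx_close X Y (e : R) := forall i j, cclose (X i j) (Y i j) e.

Definition mx_cluster s X :=
  forall e, 0 < e -> forall N0, exists2 N, (N0 <= N)%N & mx_close (s N) X e.

Lemma scalar_lipschitz (L : M -> C) : scalar L ->
  exists2 K, 0 <= K & forall X Y e, mx_close X Y e -> cclose (L X) (L Y) (K * e).
Proof.
move=> Llin; pose Ls : {scalar M} := HB.pack L (GRing.isLinear.Build _ _ _ _ _ Llin).
pose c i j := L (delta_mx i j).
pose K := \sum_i \sum_j (`|Re (c i j)| + `|Im (c i j)|).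
exists K => [|X Y e XY b].
  by apply: sumr_ge0 => i _; apply: sumr_ge0 => j _; apply: addr_ge0.
have -> : L X - L Y = \sum_i \sum_j (X i j - Y i j) * c i j.
  transitivity (Ls (\sum_i \sum_j (X - Y) i j *: delta_mx i j)).
    by rewrite -matrix_sum_delta linearB.
  rewrite linear_sum; apply: eq_bigr => i _; rewrite linear_sum.
  by apply: eq_bigr => j _; rewrite linearZ !mxE.
rewrite /K mulr_suml; case: b; rewrite /= !raddf_sum;
  apply: le_trans (ler_norm_sum _ _ _) _; apply: ler_sum => i _;
  rewrite mulr_suml !raddf_sum; apply: le_trans (ler_norm_sum _ _ _) _;
  apply: ler_sum => j _; have := XY i j true; have := XY i j false => /= hI hR.
- rewrite ReM; apply: le_trans (ler_normB _ _) _.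
  by rewrite !normrM mulrDl; apply: lerD; rewrite mulrC ler_wpM2l.
- rewrite ImM; apply: le_trans (ler_normD _ _) _.
  by rewrite !normrM mulrDl addrC; apply: lerD; rewrite mulrC ler_wpM2l.
Qed.

(* Bolzano-Weierstrass, via compactness of a box in R^(2mn) *)
Lemma bounded_mx_cluster s (K : R) :
  (forall N, mx_close (s N) 0 K) -> exists X, mx_cluster s X.
Proof.
move=> sK.
pose k := #|{: 'I_m * 'I_n * bool}|.
pose emb X : 'rV[R]_k :=
  \row_l (let: (i, j, b) := enum_val l in cpart b (X i j)).
have box := @rV_compact R^o k (fun _ => `[- K, K]%classic)
  (fun _ => @segment_compact R _ _).
have sbox : ((fun N => emb (s N)) @ \oo)
    [set v : 'rV[R^o]_k | forall l, `[- K, K]%classic (v ord0 l)].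
  exists 0%N => // N _ l /=; rewrite mxE; case: (enum_val l) => [[i j] b].
  by have := sK N i j b; rewrite mxE subr0 in_itv /= -ler_norml.
have [p [_ clp]] := box _ _ sbox.
pose X : M := \matrix_(i, j)
  ((p ord0 (enum_rank (i, j, true))) +i* (p ord0 (enum_rank (i, j, false)))).
exists X => e e0 N0.
have tail : ((fun N => emb (s N)) @ \oo)
    [set v | exists2 N, (N0 <= N)%N & v = emb (s N)].
  by exists N0 => // N hN; exists N.
have [_ [[N hN ->] [_ near_p]]] := clp _ _ tail (nbhsx_ballx p e e0).
exists N => // i j b; have := near_p ord0 (enum_rank (i, j, b)).
rewrite /ball /= /emb !mxE enum_rankK cpartB distrC => /ltW.
by case: b.
Qed.

Section ScalarFunctional.
Variables (L : M -> C) (Llin : scalar L) (s : nat -> M) (X : M).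
Hypothesis sX : mx_cluster s X.

Lemma scalar_cluster e : 0 < e -> forall N0,
  exists2 N, (N0 <= N)%N & cclose (L (s N)) (L X) e.
Proof.
move=> e0 N0; have [K K0 LK] := scalar_lipschitz Llin.
have K1 : 0 < K + 1 by rewrite ltr_wpDl.
have [N hN close_N] := sX (divr_gt0 e0 K1) N0; exists N => // b.
apply: le_trans (LK _ _ _ close_N b) _.
by rewrite mulrCA ler_piMr ?(ltW e0) // ler_pdivrMr // mul1r lerDl.
Qed.

Lemma scalar_cluster_eq c :
  (forall e, 0 < e -> \forall N \near \oo, cclose (L (s N)) c e) -> L X = c.
Proof.
move=> Lsc; apply/eqP; rewrite -subr_eq0; apply/eqP.
suff small b e : 0 < e -> `|cpart b (L X - c)| <= e.
  apply: complex_eq0; apply/eqP; rewrite -normr_le0;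
    apply/ler_addgt0Pr => e e0; rewrite add0r.
    exact: (small true).
  exact: (small false).
move=> e0; have e2 : 0 < e / 2 by rewrite divr_gt0.
have [N1 _ far] := Lsc _ e2.
have [N hN nearX] := scalar_cluster e2 N1.
have -> : L X - c = (L (s N) - c) - (L (s N) - L X) by ring.
rewrite cpartB; apply: le_trans (ler_normB _ _) _.
by rewrite [e]splitr; apply: lerD; [exact: far | exact: nearX].
Qed.

End ScalarFunctional.
End ClusterPoints.

Lemma mx_cvg_unique_cluster (R : realType) (d : nat) (s : nat -> 'M[R[i]]_d)
    (K : R) (X : 'M[R[i]]_d) :
  (forall N, mx_close (s N) 0 K) ->
  (forall phi : nat -> nat, (forall k, (k <= phi k)%N) ->
     forall Y, mx_cluster (s \o phi) Y -> Y = X) ->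
  mx_cvg s X.
Proof.
move=> sK uniq_cluster.
suff part_cvg i j b : (fun N => cpart b (s N i j)) @ \oo --> cpart b (X i j).
  by move=> i j; split; [exact: (part_cvg i j true) | exact: (part_cvg i j false)].
apply/cvgrPdist_le => e e0; apply: contrapT => not_near.
have far k : exists N, (k <= N)%N /\ e < `|cpart b (X i j) - cpart b (s N i j)|.
  apply: contrapT => not_far; apply: not_near; exists k => // N kN /=.
  by rewrite leNgt; apply/negP => far_N; apply: not_far; exists N.
have [phi phi_far] := choice far.
have [Y sY] := bounded_mx_cluster (fun N => sK (phi N)).
have YX := uniq_cluster phi (fun k => (phi_far k).1) Y sY; subst Y.
have [N _ close_N] := sY _ (divr_gt0 e0 (ltr0n _ 2)) 0%N.
have half_lt : e / 2 < e by rewrite ltr_pdivrMr // ltr_pMr // ltr1n.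
have := le_lt_trans (close_N i j b) half_lt.
by rewrite cpartB distrC ltNge ltW // (phi_far N).2.
Qed.

Section Adjoint.
Variable R : realType.
Local Notation C := R[i].
Variables m n p : nat.
Implicit Types A B : 'M[C]_(m, n).

Lemma adjE A i j : adj A i j = Num.conj (A j i).
Proof. by rewrite !mxE. Qed.

Lemma adjD A B : adj (A + B) = adj A + adj B.
Proof. by apply/matrixP=> i j; rewrite !mxE rmorphD. Qed.

Lemma adjB A B : adj (A - B) = adj A - adj B.
Proof. by apply/matrixP=> i j; rewrite !mxE rmorphB. Qed.

Lemma adjZ a A : adj (a *: A) = Num.conj a *: adj A.
Proof. by apply/matrixP=> i j; rewrite !mxE rmorphM. Qed.

Lemma adjM A (B : 'M[C]_(n, p)) : adj (A *m B) = adj B *m adj A.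
Proof.
apply/matrixP=> i j; rewrite !mxE rmorph_sum; apply: eq_bigr => k _.
by rewrite !mxE rmorphM mulrC.
Qed.

Lemma adjK A : adj (adj A) = A.
Proof. by apply/matrixP=> i j; rewrite !mxE conjCK. Qed.

Lemma adj1 : adj (1%:M : 'M[C]_m) = 1%:M.
Proof. by apply/matrixP=> i j; rewrite !mxE conjC_nat eq_sym. Qed.

End Adjoint.

Section Sandwich.
Variables (K : comNzRingType) (n : nat).

Lemma sandwich_split (A B X : 'M[K]_n) : A + B = 1%:M ->
  X = A *m X *m A + (A *m X *m B + B *m X *m A) + B *m X *m B.
Proof.
move=> AB1; rewrite -{1}(mul1mx X) -{1}(mulmx1 X) -AB1.
by rewrite mulmxDl !mulmxDr !mulmxA !addrA.
Qed.

Lemma sandwichDZ (A B X : 'M[K]_n) (a : K) :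
  (A + a *: B) *m X *m (A + a *: B)
  = A *m X *m A + a *: (A *m X *m B + B *m X *m A) + (a * a) *: (B *m X *m B).
Proof.
rewrite !(mulmxDl, mulmxDr) -!scalemxAl -!scalemxAr scalerA scalerDr.
by rewrite -!addrA; congr (_ + _); rewrite addrCA.
Qed.

End Sandwich.

Section PositiveMatrices.
Variables (R : realType) (d : nat).
Local Notation C := R[i].
Local Notation M := 'M[C]_d.
Local Notation V := 'cV[C]_d.
Implicit Types (A B X : M) (u v w : V).

Definition braket v A w : C := (adj v *m A *m w) 0 0.

Lemma braket_is_scalar v w : scalar (braket v ^~ w).
Proof.
by move=> a A B; rewrite /braket mulmxDr mulmxDl -scalemxAr -scalemxAl !mxE.
Qed.

Lemma braketD v A B w : braket v (A + B) w = braket v A w + braket v B w.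
Proof. by have := braket_is_scalar v w 1 A B; rewrite scale1r mul1r. Qed.

Lemma braketZ v a A w : braket v (a *: A) w = a * braket v A w.
Proof. by rewrite /braket -scalemxAr -scalemxAl mxE. Qed.

Lemma braket_sum v I (r : seq I) (P : pred I) (F : I -> M) w :
  braket v (\sum_(i <- r | P i) F i) w = \sum_(i <- r | P i) braket v (F i) w.
Proof.
elim/big_rec2: _ => [|i y A _ <-]; last by rewrite braketD.
by rewrite /braket mulmx0 mul0mx mxE.
Qed.

Lemma braketDl u v A w : braket (u + v) A w = braket u A w + braket v A w.
Proof. by rewrite /braket adjD !mulmxDl mxE. Qed.

Lemma braketZl a v A w : braket (a *: v) A w = Num.conj a * braket v A w.
Proof. by rewrite /braket adjZ -!scalemxAl mxE. Qed.

Lemma braketDr v A u w : braket v A (u + w) = braket v A u + braket v A w.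
Proof. by rewrite /braket mulmxDr mxE. Qed.

Lemma braketZr v A a w : braket v A (a *: w) = a * braket v A w.
Proof. by rewrite /braket -scalemxAr mxE. Qed.

Lemma braketMl v A B w : braket v (A *m B) w = braket (adj A *m v) B w.
Proof. by rewrite /braket adjM adjK !mulmxA. Qed.

Lemma braketMr v A B w : braket v (A *m B) w = braket v A (B *m w).
Proof. by rewrite /braket !mulmxA. Qed.

Lemma braket_delta A k l : braket (delta_mx k 0) A (delta_mx l 0) = A k l.
Proof.
rewrite /braket -mulmxA mxE (bigD1 k) //= big1 => [|i ik]; last first.
  by rewrite !mxE (negbTE ik) rmorph0 mul0r.
rewrite !mxE eqxx conjC1 mul1r addr0 (bigD1 l) //= big1 => [|j jl].
  by rewrite !mxE !eqxx mulr1 addr0.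
by rewrite !mxE (negbTE jl) mulr0.
Qed.

Lemma psd_scale (a : C) A : 0 <= a -> psd A -> psd (a *: A).
Proof.
by move=> a0 pA v; have := braketZ v a A v; rewrite /braket => ->; exact: mulr_ge0.
Qed.

Lemma psd_sum I (r : seq I) (P : pred I) (F : I -> M) :
  (forall i, P i -> psd (F i)) -> psd (\sum_(i <- r | P i) F i).
Proof.
move=> pF v; have := braket_sum v r P F v; rewrite /braket => ->.
by apply: sumr_ge0 => i /pF; apply.
Qed.

Lemma psd_congr B A : psd A -> psd (B *m A *m adj B).
Proof.
by move=> pA v; have := pA (adj B *m v); rewrite -/(braket _ _ _) -braketMl -braketMr.
Qed.

Lemma psd_diag_ge0 A k : psd A -> 0 <= A k k.
Proof. by move=> pA; rewrite -braket_delta; apply: pA. Qed.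

Lemma psd_tr_ge0 A : psd A -> 0 <= \tr A.
Proof. by move=> pA; apply: sumr_ge0 => k _; apply: psd_diag_ge0. Qed.

Lemma psd_diag_le_tr A k : psd A -> A k k <= \tr A.
Proof.
move=> pA; rewrite /mxtrace (bigD1 k) //= lerDl.
by apply: sumr_ge0 => i _; apply: psd_diag_ge0.
Qed.

Lemma psd_quad A i j c : psd A ->
  0 <= A i i + c * A i j + Num.conj c * A j i + Num.conj c * c * A j j.
Proof.
move=> pA; have := pA (delta_mx i 0 + c *: delta_mx j 0).
rewrite -/(braket _ _ _) !(braketDl, braketDr, braketZl, braketZr) !braket_delta.
by rewrite mulrDr !addrA mulrA.
Qed.

(* testing positivity on e_i + c e_j with c = 1, -1, i, -i bounds A i j by the trace *)
Lemma density_box A : density A -> mx_close A 0 1.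
Proof.
move=> [pA trA] i j b; rewrite mxE subr0.
have h1 := psd_quad i j 1 pA; have h2 := psd_quad i j (-1) pA.
have h3 := psd_quad i j 'i pA; have h4 := psd_quad i j (-'i) pA.
have hi := psd_diag_ge0 i pA; have hj := psd_diag_ge0 j pA.
have ti := psd_diag_le_tr i pA; have tj := psd_diag_le_tr j pA.
rewrite trA in ti tj.
move: h1 h2 h3 h4 hi hj ti tj; case: (A i i) => a1 a2; case: (A j j) => b1 b2.
case: (A i j) => x1 x2; case: (A j i) => y1 y2.
rewrite !lecE /=; simpc.
move=> /andP[/eqP e1 f1] /andP[/eqP e2 f2] /andP[/eqP e3 f3] /andP[/eqP e4 f4].
move=> /andP[/eqP e5 f5] /andP[/eqP e6 f6] /andP[_ f7] /andP[_ f8].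
by case: b; rewrite /= ler_norml; apply/andP; split; lra.
Qed.

(* the Cauchy-Schwarz step: expanding positivity on v + t w and v + i t w *)
Lemma psd_braket_eq0 A v w : psd A -> braket v A v = 0 ->
  braket w A v = 0 /\ braket v A w = 0.
Proof.
move=> pA Av0.
have expand (s : C) : braket (v + s *: w) A (v + s *: w)
    = s * braket v A w + Num.conj s * braket w A v
      + Num.conj s * s * braket w A w.
  by rewrite !(braketDl, braketDr, braketZl, braketZr) Av0; ring.
have sum0 : braket v A w + braket w A v = 0.
  apply: (quadratic_ge0_coef1_eq0 (pA w)) => t; have := pA (v + t%:C *: w).
  by rewrite -/(braket _ _ _) expand conj_real -rmorphM /= -mulrDr.
have diff0 : 'i * (braket v A w - braket w A v) = 0.
  apply: (quadratic_ge0_coef1_eq0 (pA w)) => t; have := pA (v + (t%:C * 'i) *: w).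
  rewrite -/(braket _ _ _) expand rmorphM /= conj_real.
  have -> : Num.conj ('i : C) = - 'i by simpc.
  have -> : t%:C * - 'i * (t%:C * 'i) = (t * t)%:C :> C.
    transitivity (- (t%:C * t%:C) * 'i ^+ 2 : C); first ring.
    by rewrite sqr_i mulrN1 opprK rmorphM.
  congr (0 <= _ + _); ring.
have sym : braket v A w = braket w A v.
  apply/eqP; rewrite -subr_eq0; move/eqP: diff0.
  by rewrite mulf_eq0 => /orP[/eqP [] /eqP | //]; rewrite oner_eq0.
have : braket v A w *+ 2 = 0 by rewrite mulr2n {2}sym.
by move/eqP; rewrite mulrn_eq0 /= => /eqP vAw0; rewrite -sym.
Qed.

Lemma density_cluster (s : nat -> M) X :
  (forall N, density (s N)) -> mx_cluster s X -> density X.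
Proof.
move=> sd sX; split => [v|].
  have near_X := scalar_cluster (braket_is_scalar v v) sX.
  have part_near b e :
      0 < e -> exists N, `|cpart b (braket v (s N) v - braket v X v)| <= e.
    by move=> e0; have [N _ close_N] := near_X e e0 0%N; exists N; exact: close_N.
  rewrite -/(braket _ _ _) lecE /= -normr_le0; apply/andP; split.
    apply/ler_addgt0Pr => e e0; rewrite add0r; have [N] := part_near false e e0.
    by rewrite cpartB /= (ger0_Im ((sd N).1 v)) sub0r normrN.
  apply: ge0_le_eps => e e0; have [N] := part_near true e e0.
  rewrite cpartB ler_norml /= => /andP[_ h].
  have := (sd N).1 v; rewrite lecE => /andP[_ /= sN0]; lra.
apply: (scalar_cluster_eq (@matrix.mxtrace_is_scalar _ _) sX) => e e0.
by near=> N; move=> b; rewrite (sd N).2 subrr; case: b; rewrite /= normr0 ltW.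
Unshelve. all: by end_near.
Qed.

End PositiveMatrices.

Lemma cp_psd (R : realType) (d : nat) (T : 'M[R[i]]_d -> 'M[R[i]]_d)
    (X : 'M[R[i]]_d) :
  completely_positive T -> psd X -> psd (T X).
Proof.
move=> Tcp pX v.
have pX1 : block_psd (fun _ _ : 'I_1 => X) by move=> u; rewrite !big_ord1; apply: pX.
by have := Tcp _ _ pX1 (fun _ => v); rewrite !big_ord1.
Qed.

Fact pure_state_key : unit. Proof. by []. Qed.
Definition pure_state (R : realType) (d : nat) (psi : 'cV[R[i]]_d) : 'M[R[i]]_d :=
  locked_with pure_state_key (psi *m adj psi).
Lemma pure_stateE (R : realType) d (psi : 'cV[R[i]]_d) : pure_state psi = psi *m adj psi.
Proof. exact: unlock. Qed.

Section PureState.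
Variables (R : realType) (d : nat) (psi : 'cV[R[i]]_d).
Hypothesis psi_unit : (adj psi *m psi) 0 0 = 1.
Local Notation C := R[i].
Local Notation M := 'M[C]_d.
Local Notation P := (pure_state psi).
Local Notation Q := (1%:M - P).
Implicit Types (A X : M) (v w : 'cV[C]_d).

Lemma adj_psi_psi : adj psi *m psi = 1%:M.
Proof. by apply/matrixP=> i j; rewrite !ord1 psi_unit mxE. Qed.

Lemma adj_pure_state : adj P = P.
Proof. by rewrite pure_stateE adjM adjK. Qed.

Lemma pure_state_idem : P *m P = P.
Proof.
by rewrite pure_stateE mulmxA -(mulmxA psi) adj_psi_psi mul_mx_scalar scale1r.
Qed.

Lemma adj_pure_compl : adj Q = Q.
Proof. by rewrite adjB adj1 adj_pure_state. Qed.

Lemma pure_compl_idem : Q *m Q = Q.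
Proof.
by rewrite mulmxBl mul1mx mulmxBr mulmx1 pure_state_idem subrr subr0.
Qed.

Lemma braket_pure_state v w :
  braket v P w = Num.conj ((adj psi *m v) 0 0) * (adj psi *m w) 0 0.
Proof.
rewrite /braket pure_stateE mulmxA -(mulmxA _ (adj psi)) mxE big_ord1.
have -> : adj v *m psi = adj (adj psi *m v) by rewrite adjM adjK.
by rewrite adjE.
Qed.

Lemma braket_psi_pure : braket psi P psi = 1.
Proof. by rewrite braket_pure_state psi_unit conjC1 mulr1. Qed.

Lemma density_pure_state : density P.
Proof.
split; last by rewrite pure_stateE mxtrace_mulC adj_psi_psi mxtrace1.
by move=> v; rewrite -/(braket _ _ _) braket_pure_state mulrC mul_conjC_ge0.
Qed.

Lemma pure_state_sandwich X : P *m X *m P = braket psi X psi *: P.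
Proof.
rewrite pure_stateE !mulmxA -(mulmxA psi) -(mulmxA psi).
have -> : adj psi *m X *m psi = (braket psi X psi)%:M.
  by apply/matrixP=> i j; rewrite !ord1 [RHS]mxE eqxx mulr1n.
by rewrite mul_mx_scalar -scalemxAl.
Qed.

Lemma tr_pure_compl_sandwich X : \tr (Q *m X *m Q) = \tr X - braket psi X psi.
Proof.
rewrite mxtrace_mulC mulmxA pure_compl_idem mulmxBl mul1mx linearB /= pure_stateE.
by rewrite mxtrace_mulC mulmxA mxtrace_mulC mulmxA /braket /mxtrace big_ord1.
Qed.

Lemma psd_pure_compl_sandwich X : psd X -> psd (Q *m X *m Q).
Proof. by rewrite -{2}adj_pure_compl; apply: psd_congr. Qed.

Lemma braket_psi_le_tr X : psd X -> braket psi X psi <= \tr X.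
Proof.
move=> pX; rewrite -subr_ge0 -tr_pure_compl_sandwich.
exact/psd_tr_ge0/psd_pure_compl_sandwich.
Qed.

(* a density with full weight on psi has Q A Q = 0, hence A Q = Q A = 0 *)
Lemma density_braket_psi_eq1 A : density A -> braket psi A psi = 1 -> A = P.
Proof.
move=> [pA trA] Apsi.
have QAQ_diag k : (Q *m A *m Q) k k = 0.
  have : \tr (Q *m A *m Q) = 0 by rewrite tr_pure_compl_sandwich trA Apsi subrr.
  move/psumr_eq0P; apply=> // i _.
  exact/psd_diag_ge0/psd_pure_compl_sandwich.
have Q_null k : braket (Q *m delta_mx k 0) A (Q *m delta_mx k 0) = 0.
  by rewrite -{1}adj_pure_compl -braketMl -braketMr braket_delta QAQ_diag.
have split_delta k : delta_mx k 0 = P *m delta_mx k 0 + Q *m delta_mx k 0 :> 'cV_d.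
  by rewrite -mulmxDl addrC subrK mul1mx.
apply/matrixP=> i j.
rewrite -braket_delta (split_delta i) (split_delta j) !(braketDl, braketDr).
have Q_right k w : braket w A (Q *m delta_mx k 0) = 0.
  exact: (psd_braket_eq0 w pA (Q_null k)).1.
have Q_left k w : braket (Q *m delta_mx k 0) A w = 0.
  exact: (psd_braket_eq0 w pA (Q_null k)).2.
rewrite !Q_right !Q_left !addr0.
rewrite -{1}adj_pure_state -braketMl -braketMr pure_state_sandwich Apsi.
by rewrite scale1r braket_delta.
Qed.

End PureState.

Section ChannelWithPureFixedPoint.
Variables (R : realType) (d : nat) (psi : 'cV[R[i]]_d).
Hypothesis psi_unit : (adj psi *m psi) 0 0 = 1.
Local Notation C := R[i].
Local Notation M := 'M[C]_d.
Local Notation P := (pure_state psi).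
Local Notation Q := (1%:M - P).
Implicit Types (X Y rho : M).

Variable T : {linear M -> M}.
Hypothesis T_psd : forall X, psd X -> psd (T X).
Hypothesis T_tr : trace_preserving T.
Hypothesis TP : T P = P.

(* the weight that T moves off psi; it equals tr (Q T(Y) Q) *)
Let leak Y := \tr Y - braket psi (T Y) psi.

Let leak_ge0 Y : psd Y -> 0 <= leak Y.
Proof. by move=> pY; rewrite subr_ge0 -T_tr; apply/(braket_psi_le_tr psi_unit)/T_psd. Qed.

Let leakD Y Z : leak (Y + Z) = leak Y + leak Z.
Proof. by rewrite /leak !linearD braketD; ring. Qed.

Let leakZ a Y : leak (a *: Y) = a * leak Y.
Proof. by rewrite /leak mxtraceZ linearZ braketZ; ring. Qed.

Let leak_pure : leak P = 0.
Proof.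
by rewrite /leak TP (braket_psi_pure psi_unit) (density_pure_state psi_unit).2 subrr.
Qed.

(* Positivity of the leak on (P + t Q) X (P + t Q) for every real t kills its
   cross term, so leak X = leak (Q X Q) <= tr (Q X Q) = tr X - <psi, X psi>. *)
Lemma braket_psi_channel_ge X : psd X -> braket psi X psi <= braket psi (T X) psi.
Proof.
move=> pX.
pose cross := P *m X *m Q + Q *m X *m P.
have leak_PXP : leak (P *m X *m P) = 0.
  by rewrite pure_state_sandwich leakZ leak_pure mulr0.
have cross0 : leak cross = 0.
  apply: (quadratic_ge0_coef1_eq0 (leak_ge0 (psd_pure_compl_sandwich psi pX))) => t.
  pose B := P + t%:C *: Q.
  have adjB : adj B = B.
    by rewrite adjD adj_pure_state adjZ adj_pure_compl conj_real.
  have := leak_ge0 (psd_congr B pX); rewrite adjB.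
  rewrite sandwichDZ -rmorphM.
  by rewrite /cross !(leakD, leakZ) leak_PXP add0r.
have decomp := sandwich_split X (subrKC P 1%:M).
have : leak X <= \tr (Q *m X *m Q).
  rewrite {1}decomp leakD leakD leak_PXP cross0 !add0r /leak lerBlDr lerDl.
  exact/T_psd/psd_pure_compl_sandwich.
by rewrite (tr_pure_compl_sandwich psi_unit) /leak lerD2l lerN2.
Qed.

Lemma density_iter n rho : density rho -> density (iter n T rho).
Proof.
move=> rho_d; elim: n => //= n [p tr1].
by split; [exact: T_psd | rewrite T_tr].
Qed.

Definition fidelity rho n := Re (braket psi (iter n T rho) psi).

Lemma fidelity_mono rho :
  density rho -> {homo fidelity rho : n m / (n <= m)%N >-> n <= m}.
Proof.
move=> rho_d n m /subnKC <-; elim: (m - n)%N => [|k IH]; first by rewrite addn0.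
apply: le_trans IH _; rewrite addnS /fidelity /=.
have := braket_psi_channel_ge (density_iter (n + k) rho_d).1.
by rewrite lecE => /andP[].
Qed.

Definition cesaro_mean rho N : M :=
  ((N.+1)%:R^-1 : R)%:C *: \sum_(n < N.+1) iter n T rho.

Lemma density_cesaro_mean rho N : density rho -> density (cesaro_mean rho N).
Proof.
move=> rho_d; split.
  apply: psd_scale; first by rewrite ler0c invr_ge0 ler0n.
  by apply: psd_sum => n _; apply: (density_iter n rho_d).1.
rewrite mxtraceZ raddf_sum /=.
under eq_bigr do rewrite (density_iter _ rho_d).2.
by rewrite sumr_const card_ord fmorphV rmorph_nat mulVf // pnatr_eq0.
Qed.

Lemma cesaro_mean_defect rho N :
  T (cesaro_mean rho N) - cesaro_mean rho N
  = ((N.+1)%:R^-1 : R)%:C *: (iter N.+1 T rho - rho).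
Proof.
rewrite /cesaro_mean linearZ linear_sum -scalerBr -sumrB; congr (_ *: _).
by have := @telescope_sumr _ 0 N.+1 (fun k => iter k T rho) (leq0n _); rewrite big_mkord.
Qed.

Lemma cesaro_mean_cluster_fixed rho X :
  density rho -> mx_cluster (cesaro_mean rho) X -> T X = X.
Proof.
move=> rho_d cX; apply/matrixP => i j; apply/eqP; rewrite -subr_eq0; apply/eqP.
have defect_scalar : scalar (fun Y => (T Y - Y) i j).
  by move=> a Y Z; rewrite linearP !mxE; ring.
have -> : T X i j - X i j = (T X - X) i j by rewrite !mxE.
apply: (scalar_cluster_eq defect_scalar cX) => e e0.
have part_le2 N b : `|cpart b ((iter N.+1 T rho - rho) i j)| <= 2.
  have := density_box (density_iter N.+1 rho_d) i j b.
  have := density_box rho_d i j b; rewrite !mxE !subr0 cpartB => rho_le iter_le.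
  by apply: le_trans (ler_normB _ _) _; rewrite -[2%:R]/(1 + 1); exact: lerD.
exists (Num.Def.archi_bound (2 / e)) => // N /= N_large b.
have N_gt : 2 < e * N.+1%:R.
  rewrite mulrC -ltr_pdivrMr //; apply: lt_le_trans (archi_boundP _) _.
    by rewrite divr_ge0 // ltW.
  by rewrite ler_nat; exact: leqW.
rewrite subr0 cesaro_mean_defect mxE cpart_realM normrM ger0_norm ?invr_ge0 ?ler0n //.
rewrite ler_pdivrMl ?ltr0n //; apply: le_trans (part_le2 N b) _.
by rewrite mulrC ltW.
Qed.

Lemma Re_braket_cesaro_mean rho N :
  Re (braket psi (cesaro_mean rho N) psi) = (N.+1)%:R^-1 * \sum_(n < N.+1) fidelity rho n.
Proof. by rewrite /fidelity braketZ braket_sum -raddf_sum; exact: (cpart_realM true). Qed.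

Hypothesis fixed_pure : forall X, density X -> T X = X -> X = P.

Lemma fidelity_near1 rho e : density rho -> 0 < e -> exists n, 1 - e <= fidelity rho n.
Proof.
move=> rho_d e0; apply: contrapT => far; have {}far n : fidelity rho n < 1 - e.
  by rewrite ltNge; apply/negP => near_n; apply: far; exists n.
have ces_d N := density_cesaro_mean N rho_d.
have [X cX] := bounded_mx_cluster (fun N => density_box (ces_d N)).
have XP : X = P.
  exact: fixed_pure (density_cluster ces_d cX) (cesaro_mean_cluster_fixed rho_d cX).
have [N _ close_N] :=
  scalar_cluster (braket_is_scalar psi psi) cX (divr_gt0 e0 (ltr0n _ 2)) 0%N.
have := close_N true; rewrite XP (braket_psi_pure psi_unit) cpartB /= ler_norml.
case/andP=> + _; rewrite Re_braket_cesaro_mean.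
have : (N.+1)%:R^-1 * \sum_(n < N.+1) fidelity rho n <= 1 - e.
  rewrite ler_pdivrMl ?ltr0n //.
  have -> : N.+1%:R * (1 - e) = \sum_(n < N.+1) (1 - e).
    by rewrite sumr_const card_ord mulr_natl.
  by apply: ler_sum => n _; exact: ltW.
set avg := _ * _ => avg_le avg_ge; lra.
Qed.

Lemma iter_cvg_pure rho : density rho -> mx_cvg (fun n => iter n T rho) P.
Proof.
move=> rho_d; apply: (@mx_cvg_unique_cluster _ _ _ 1) => [N|phi phi_ge X cX].
  exact/density_box/density_iter.
have iter_d k : density (iter (phi k) T rho) := density_iter (phi k) rho_d.
apply: (density_braket_psi_eq1 psi_unit (density_cluster iter_d cX)).
apply: (scalar_cluster_eq (braket_is_scalar psi psi) cX) => e e0.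
have [n0 near_n0] := fidelity_near1 rho_d e0.
exists n0 => // N /= n0N b.
have fid_le1 : fidelity rho (phi N) <= 1.
  have := braket_psi_le_tr psi_unit (iter_d N).1.
  by rewrite (iter_d N).2 lecE => /andP[].
have Im0 : Im (braket psi (iter (phi N) T rho) psi) = 0.
  exact: ger0_Im ((iter_d N).1 psi).
have := fidelity_mono rho_d (leq_trans n0N (phi_ge N)).
rewrite /fidelity cpartB; case: b => /= [fid_ge|_].
  by rewrite ler_norml; apply/andP; split; lra.
by rewrite Im0 subrr normr0 ltW.
Qed.

End ChannelWithPureFixedPoint.

Lemma ergodic_fixed_unique (R : realType) (d : nat)
    (T : 'M[R[i]]_d -> 'M[R[i]]_d) (rho sigma : 'M[R[i]]_d) :
  ergodic T -> density rho -> T rho = rho -> density sigma -> T sigma = sigma ->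
  sigma = rho.
Proof.
move=> [rho0 [_ [_ uniq0]]] rho_d Trho sigma_d Tsigma.
by rewrite (uniq0 _ rho_d Trho) (uniq0 _ sigma_d Tsigma).
Qed.

Theorem mainTheorem15 (R : realType) (d : nat)
  (T : 'M[R[i]]_d -> 'M[R[i]]_d) (psi1 : 'cV[R[i]]_d) :
  quantum_channel T ->
  ergodic T ->
  (adj psi1 *m psi1) 0 0 = 1 ->
  T (psi1 *m adj psi1) = psi1 *m adj psi1 ->
  mixing T /\
  (forall rho : 'M[R[i]]_d, density rho ->
     mx_cvg (fun n => iter n T rho) (psi1 *m adj psi1)).
Proof.
move=> [T_lin [T_cp T_tr]] T_erg psi_unit TP; rewrite -pure_stateE in TP *.
pose TL : {linear 'M[R[i]]_d -> 'M[R[i]]_d} :=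
  HB.pack T (GRing.isLinear.Build _ _ _ _ T T_lin).
have P_d := density_pure_state psi_unit.
have fixed_pure X : density X -> TL X = X -> X = pure_state psi1.
  by move=> X_d TX; apply: ergodic_fixed_unique T_erg P_d TP X_d TX.
have cvg_P rho : density rho -> mx_cvg (fun n => iter n T rho) (pure_state psi1).
  exact: (iter_cvg_pure psi_unit (T := TL) (fun X => cp_psd T_cp) T_tr TP fixed_pure).
by split => //; exists (pure_state psi1).
Qed.
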